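(* Let $\sigma$ be a signature and $\{\varphi_i\mid i\in I\}$ a finite nonempty set of pairwise causally incompatible formulas, all in $\mathcal{COD}[\sigma]$ or all in $\mathcal{CO}_{\sqcup}[\sigma]$. Then $\bigsqcup_{i\in I}\varphi_i\equiv^c\bigvee_{i\in I}\varphi_i$.
   Context: A signature $\sigma=(\mathrm{Dom},\mathrm{Ran})$: $\mathrm{Dom}$ nonempty finite set of variables, each with nonempty finite range $\mathrm{Ran}(X)$; $\mathbf X=\mathbf x$ abbreviates $X_1=x_1\wedge\dots\wedge X_n=x_n$ ($\mathbf x\in\prod\mathrm{Ran}(X_i)$), inconsistent if it contains $X=x,X=x'$ with $x\ne x'$. Languages: $\mathcal{CO}[\sigma]$: $\alpha::=X=x\mid\neg\alpha\mid\alpha\wedge\alpha\mid\alpha\vee\alpha\mid\mathbf X=\mathbf x\;\Box\!\!\rightarrow\alpha$; $\mathcal{CO}_{\sqcup}[\sigma]$: $\varphi::=X=x\mid\neg\alpha\mid\varphi\wedge\varphi\mid\varphi\vee\varphi\mid\varphi\sqcup\varphi\mid\mathbf X=\mathbf x\;\Box\!\!\rightarrow\varphi$; $\mathcal{COD}[\sigma]$: $\varphi::=X=x\mid{=}(\mathbf X;Y)\mid\neg\alpha\mid\varphi\wedge\varphi\mid\varphi\vee\varphi\mid\mathbf X=\mathbf x\;\Box\!\!\rightarrow\varphi$ ($\alpha\in\mathcal{CO}[\sigma]$). Systems of functions $\mathcal F$: for each $V\in\mathrm{En}(\mathcal F)\subseteq\mathrm{Dom}$ parents $PA^{\mathcal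 F}_V\subseteq\mathrm{Dom}\setminus\{V\}$ and $\mathcal F_V:\mathrm{Ran}(PA^{\mathcal F}_V)\to\mathrm{Ran}(V)$; $\mathrm{Ex}(\mathcal F)=\mathrm{Dom}\setminus\mathrm{En}(\mathcal F)$; only recursive (acyclic parent graph). An assignment $s$ is compatible with $\mathcal F$ if $s(V)=\mathcal F_V(s(PA^{\mathcal F}_V))$ for $V\in\mathrm{En}(\mathcal F)$. A causal team $T=(T^-,\mathcal F)$: a recursive $\mathcal F$ and a set $T^-$ of compatible assignments (empty team components identified as $\emptyset$); causal subteams $(S^-,\mathcal F)$ with $S^-\subseteq T^-$. For consistent $\mathbf X=\mathbf x$: $\mathcal F_{\mathbf X=\mathbf x}$ restricts $\mathcal F$ to $\mathrm{En}(\mathcal F)\setminus\mathbf X$; $s^{\mathcal F}_{\mathbf X=\mathbf x}$: $X_i\mapsto x_i$, $V\mapsto s(V)$ on $\mathrm{Ex}(\mathcal F)\setminus\mathbf X$, $V\mapsto\mathcal F_V(s^{\mathcal F}_{\mathbf X=\mathbf x}(PA^{\mathcal F}_V))$ on $\mathrm{En}(\mathcal F)\setminus\mathbf X$; $T_{\mathbf X=\mathbf x}=(\{s^{\mathcal F}_{\mathbf X=\mathbf x}:s\in T^-\},\mathcal F_{\mathbf X=\mathbf x})$. $\models^c$: $T\models X=x$ iff $s(X)=x$ for all $s\in T^-$; $T\models{=}(\mathbf X;Y)$ iff for all $s,s'\in T^-$, $s(\mathbf X)=s'(\mathbf X)$ implies $s(Y)=s'(Y)$; $T\models\neg\alpha$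 iff $(\{s\},\mathcal F)\not\models\alpha$ for all $s\in T^-$; $\wedge$ classical; $T\models\varphi\vee\psi$ iff there are causal subteams $T_1,T_2$ with $T_1^-\cup T_2^-=T^-$, $T_1\models\varphi$, $T_2\models\psi$; $T\models\varphi\sqcup\psi$ iff $T\models\varphi$ or $T\models\psi$; $T\models\mathbf X=\mathbf x\;\Box\!\!\rightarrow\varphi$ iff $\mathbf X=\mathbf x$ inconsistent or $T_{\mathbf X=\mathbf x}\models\varphi$. $\varphi\equiv^c\psi$: same causal teams over $\sigma$ satisfy both. $\mathrm{Cn}(\mathcal F)=\{V\in\mathrm{En}(\mathcal F):\mathcal F_V\text{ constant}\}$; $\mathcal F_V\sim\mathcal G_V$ iff $\mathcal F_V(\mathbf x\mathbf y)=\mathcal G_V(\mathbf x\mathbf z)$ for all $\mathbf x\in\mathrm{Ran}(PA^{\mathcal F}_V\cap PA^{\mathcal G}_V)$, $\mathbf y\in\mathrm{Ran}(PA^{\mathcal F}_V\setminus PA^{\mathcal G}_V)$, $\mathbf z\in\mathrm{Ran}(PA^{\mathcal G}_V\setminus PA^{\mathcal F}_V)$; $\mathcal F\sim\mathcal G$ iff $\mathrm{En}(\mathcal F)\setminus\mathrm{Cn}(\mathcal F)=\mathrm{En}(\mathcal G)\setminus\mathrm{Cn}(\mathcal G)$ and $\mathcal F_V\sim\mathcal G_V$ for each such $V$. Formulas $\varphi,\psi$ are (causally) incompatible if for all nonempty causal teams $S=(S^-,\mathcal F)$, $T=(T^-,\mathcal G)$ over $\sigma$, $S\models^c\varphi$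 and $T\models^c\psi$ imply $\mathcal F\not\sim\mathcal G$. *)

From mathcomp Require Import all_boot.
Set Implicit Arguments.
Unset Strict Implicit.
Unset Printing Implicit Defensive.

Section CausalTeams.

(* A signature: Dom = the finite type V of variables, Ran X = the finite type R X. *)
Variables (V : finType) (R : V -> finType).

Definition asg := {dffun forall X : V, R X}.

(* Systems of functions: endogenous variables, parent sets, and for each
   endogenous V a function F_V, encoded as a function of a full assignment
   that depends only on the values of the parents (wf_sys). *)
Record sysF := SysF {
  En : {set V};
  PA : V -> {set V};
  fn : forall W : V, asg -> R W }.

Definition Ex (F : sysF) : {set V} := ~: En F.

Definition pa_edge (F : sysF) : rel V := fun W U => (U \in En F) && (W \in PA F U).

Definition recursive (F : sysF) : Prop :=
  forall W U, pa_edge F W U -> ~~ connect (pa_edge F) U W.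

Definition wf_sys (F : sysF) : Prop :=
  [/\ forall U, U \in En F -> U \notin PA F U,
      forall U, U \in En F -> forall a b : asg,
        (forall X, X \in PA F U -> a X = b X) -> fn F U a = fn F U b
    & recursive F].

Definition compatible (F : sysF) (s : asg) : Prop :=
  forall U, U \in En F -> s U = fn F U s.

Definition causal_team (F : sysF) (T : {set asg}) : Prop :=
  wf_sys F /\ forall s, s \in T -> compatible F s.

(* Interventions X = x: a finite list of atoms (X_i, x_i) *)
Definition interv := seq {X : V & R X}.

Definition consistent (l : interv) : bool :=
  all (fun p => all (fun q => (tag p == tag q) ==> (p == q)) l) l.

Definition ivars (l : interv) : {set V} := [set tag p | p in l].

(* value prescribed by l for U (first matching atom), default d *)
Definition ival (l : interv) (U : V) (d : R U) : R U :=
  foldr (fun p acc => untag acc (@id (R U)) p) d l.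

Definition sys_int (F : sysF) (l : interv) : sysF :=
  SysF (En F :\: ivars l) (PA F) (fn F).

Definition int_step (F : sysF) (l : interv) (s t : asg) : asg :=
  [ffun U : V => if U \in ivars l then ival l (s U)
                 else if U \in En F then fn F U t else s U].

(* s^F_{X=x}: since the parent graph is acyclic, iterating the defining
   equations #|V| times from s yields the recursively defined assignment. *)
Definition asg_int (F : sysF) (l : interv) (s : asg) : asg :=
  iter #|V| (int_step F l s) s.

Definition team_int (F : sysF) (l : interv) (T : {set asg}) : {set asg} :=
  [set asg_int F l s | s in T].

Inductive form :=
  | fEq : forall X : V, R X -> form
  | fDep : seq V -> V -> form
  | fNeg : form -> form
  | fAnd : form -> form -> form
  | fOr : form -> form -> form
  | fSqcup : form -> form -> form
  | fCf : interv -> form -> form.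

Fixpoint isCO (f : form) : bool :=
  match f with
  | fEq _ _ => true
  | fDep _ _ => false
  | fNeg a => isCO a
  | fAnd a b | fOr a b => isCO a && isCO b
  | fSqcup _ _ => false
  | fCf _ a => isCO a
  end.

Fixpoint isCOsq (f : form) : bool :=
  match f with
  | fEq _ _ => true
  | fDep _ _ => false
  | fNeg a => isCO a
  | fAnd a b | fOr a b | fSqcup a b => isCOsq a && isCOsq b
  | fCf _ a => isCOsq a
  end.

Fixpoint isCOD (f : form) : bool :=
  match f with
  | fEq _ _ => true
  | fDep _ _ => true
  | fNeg a => isCO a
  | fAnd a b | fOr a b => isCOD a && isCOD b
  | fSqcup _ _ => false
  | fCf _ a => isCOD a
  end.

Fixpoint sat (F : sysF) (T : {set asg}) (f : form) : Prop :=
  match f with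
  | fEq X x => forall s, s \in T -> s X = x
  | fDep Xs Y => forall s s', s \in T -> s' \in T ->
        (forall X, X \in Xs -> s X = s' X) -> s Y = s' Y
  | fNeg a => forall s, s \in T -> ~ sat F [set s] a
  | fAnd a b => sat F T a /\ sat F T b
  | fOr a b => exists T1 T2 : {set asg},
        T1 :|: T2 = T /\ sat F T1 a /\ sat F T2 b
  | fSqcup a b => sat F T a \/ sat F T b
  | fCf l a => ~~ consistent l \/ sat (sys_int F l) (team_int F l T) a
  end.

Definition ceq (f g : form) : Prop :=
  forall F T, causal_team F T -> (sat F T f <-> sat F T g).

Definition Cn (F : sysF) : {set V} :=
  [set U in En F | [forall a : asg, forall b : asg, fn F U a == fn F U b]].

Definition fn_sim (F G : sysF) (U : V) : Prop :=
  forall a b : asg, (forall X, X \in PA F U -> X \in PA G U -> a X = b X) ->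
    fn F U a = fn G U b.

Definition sys_sim (F G : sysF) : Prop :=
  En F :\: Cn F = En G :\: Cn G /\ forall U, U \in En F :\: Cn F -> fn_sim F G U.

Definition incompatible (f g : form) : Prop :=
  forall F (S : {set asg}) G (T : {set asg}),
    causal_team F S -> S != set0 -> causal_team G T -> T != set0 ->
    sat F S f -> sat G T g -> ~ sys_sim F G.

Fixpoint bigop_form (op : form -> form -> form) (f : form) (l : seq form) : form :=
  match l with
  | [::] => f
  | g :: l' => op f (bigop_form op g l')
  end.

End CausalTeams.

(* Every formula holds in the empty team, so a team satisfying one disjunct
   satisfies the tensor disjunction: give that disjunct the whole team and the
   others the empty one.  Conversely, the subteams of a split of a causal team
   share its system of functions F, and F ~ F; hence two nonempty subteams
   cannot satisfy incompatible disjuncts, so all but one subteam is empty and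
   the remaining one is the whole team. *)
From mathcomp Require Import all_boot.

Set Implicit Arguments.
Unset Strict Implicit.
Unset Printing Implicit Defensive.

Section Disjunctions.
Variables (V : finType) (R : V -> finType).

Implicit Types (F : sysF R) (S T : {set asg R}) (f g d : form R) (l : seq (form R)).

Lemma sat_set0 f F : sat F set0 f.
Proof.
elim: f F => [X x|Xs Y|a IHa|a IHa b IHb|a IHa b IHb|a IHa b IHb|l a IHa] F /=.
- by move=> s; rewrite inE.
- by move=> s s'; rewrite inE.
- by move=> s; rewrite inE.
- by split.
- by exists set0, set0; rewrite setU0.
- by left.
- by right; rewrite /team_int imset0.
Qed.

Lemma causal_teamS F S T : S \subset T -> causal_team F T -> causal_team F S.
Proof. by move=> /subsetP sST [wfF compT]; split=> // s /sST; apply: compT. Qed.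

Lemma sys_sim_refl F : wf_sys F -> sys_sim F F.
Proof.
move=> [_ fn_PA _]; split=> // U; rewrite inE => /andP [_ enU] a b eq_ab.
by apply: fn_PA => // X PA_X; apply: eq_ab.
Qed.

Lemma incompatible_same_sys F S T f g :
  causal_team F S -> causal_team F T -> incompatible f g ->
  sat F S f -> sat F T g -> S = set0 \/ T = set0.
Proof.
move=> ctS ctT incfg Sf Tg.
have [-> | S0] := eqVneq S set0; first by left.
have [-> | T0] := eqVneq T set0; first by right.
by case: (incfg F S F T ctS S0 ctT T0 Sf Tg); apply: sys_sim_refl; case: ctS.
Qed.

Lemma sat_bigSqcup d {F T f l} :
  sat F T (bigop_form (@fSqcup V R) f l) <->
  exists2 i, i < size (f :: l) & sat F T (nth d (f :: l) i).
Proof.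
elim: l f => [|g l IHl] f /=.
  by split=> [Tf | [[|i] //]]; exists 0.
split=> [[Tf | /IHl [i lti Ti]] | [[|i] lti Ti]].
- by exists 0.
- by exists i.+1.
- by left.
- by right; apply/IHl; exists i.
Qed.

Lemma sat_bigOr_nth F T d f l i :
  i < size (f :: l) -> sat F T (nth d (f :: l) i) ->
  sat F T (bigop_form (@fOr V R) f l).
Proof.
elim: l f i => [|g l IHl] f [|i] //= lti Ti.
- by exists T, set0; rewrite setU0; split=> //; split=> //; apply: sat_set0.
- by exists set0, T; rewrite set0U; split=> //; split; [apply: sat_set0 | apply: IHl lti Ti].
Qed.

Lemma sat_bigOr_incompatible F T d f l :
  causal_team F T ->
  (forall i j, i < size (f :: l) -> j < size (f :: l) -> i != j ->
     incompatible (nth d (f :: l) i) (nth d (f :: l) j)) ->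
  sat F T (bigop_form (@fOr V R) f l) ->
  exists2 i, i < size (f :: l) & sat F T (nth d (f :: l) i).
Proof.
elim: l f T => [|g l IHl] f T ctT incl /=; first by exists 0.
move=> [T1 [T2 [defT [T1f T2l]]]].
have ctT1 : causal_team F T1 by apply: causal_teamS ctT; rewrite -defT subsetUl.
have ctT2 : causal_team F T2 by apply: causal_teamS ctT; rewrite -defT subsetUr.
have [j ltj T2j] : exists2 j, j < size (g :: l) & sat F T2 (nth d (g :: l) j).
  by apply: IHl => // i k lti ltk neik; apply: (incl i.+1 k.+1).
have [T1_0 | T2_0] := incompatible_same_sys ctT1 ctT2 (incl 0 j.+1 isT ltj isT) T1f T2j.
- by exists j.+1; rewrite // -defT T1_0 set0U.
- by exists 0; rewrite // -defT T2_0 setU0.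
Qed.

End Disjunctions.

Theorem lemma3p9 (V : finType) (R : V -> finType)
  (HV : 0 < #|V|) (HR : forall X : V, 0 < #|R X|)
  (f0 : form R) (fs : seq (form R)) :
  let phi := f0 :: fs in
  (forall i j, i < size phi -> j < size phi -> i != j ->
     incompatible (nth f0 phi i) (nth f0 phi j)) ->
  ((forall i, i < size phi -> isCOD (nth f0 phi i)) \/
   (forall i, i < size phi -> isCOsq (nth f0 phi i))) ->
  ceq (bigop_form (@fSqcup V R) f0 fs) (bigop_form (@fOr V R) f0 fs).
Proof.
move=> phi incl _ F T ctT; split.
- by case/(sat_bigSqcup f0)=> i; apply: sat_bigOr_nth.
- by move/(sat_bigOr_incompatible ctT incl)=> ?; apply/(sat_bigSqcup f0).
Qed.
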